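(* Let $k\ge0$ be an integer and $a,b,d\in\mathbb{C}$ generic. Put $u=\tfrac34-\tfrac k2-\tfrac a2+\tfrac b2$, $v=\tfrac34-\tfrac k2-\tfrac a2-\tfrac b2$ and define the polynomial of degree $3k$ in $n$ $$Q_k^{(3')}(n;a;b;d)=\frac{1}{(u)_k(v)_k}\sum_{j=0}^k\frac{(-\tfrac n2)_j(-\tfrac n2+\tfrac12)_j(-k)_j(-n-a+d)_j}{j!\,(d)_j}\,(u-n+j)_{k-j}(v-n+j)_{k-j}.$$ Then, near $x=0$, $${}_4F_3\!\left[\begin{matrix}\tfrac a3,\ \tfrac13+\tfrac a3,\ \tfrac23+\tfrac a3,\ k+d\\ \tfrac34+\tfrac k2+\tfrac a2+\tfrac b2,\ \tfrac34+\tfrac k2+\tfrac a2-\tfrac b2,\ d\end{matrix}\,\Big|\,\frac{27x^2}{(4-x)^3}\right]=\Bigl(1-\tfrac x4\Bigr)^a\sum_{n=0}^\infty\frac{(a)_n(\tfrac14-\tfrac k2+\tfrac a2-\tfrac b2)_n(\tfrac14-\tfrac k2+\tfrac a2+\tfrac b2)_n}{n!\,(\tfrac12+k+a+b)_n(\tfrac12+k+a-b)_n}\,Q_k^{(3')}(n;a;b;d)\,x^n.$$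
   Context: $(c)_n$ denotes the Pochhammer symbol, $(c)_0=1$; ${}_pF_q$ is the generalized hypergeometric series. Parameters are assumed generic so that no lower parameter is a nonpositive integer and $(u)_k(v)_k\ne0$. *)

From HB Require Import structures.
From mathcomp Require Import all_boot all_order all_algebra.
Set Implicit Arguments. Unset Strict Implicit. Unset Printing Implicit Defensive.
Import Order.TTheory GRing.Theory Num.Theory.
Local Open Scope ring_scope.

Definition poch (R : ringType) (c : R) (n : nat) : R :=
  \prod_(i < n) (c + i%:R).

Definition fps (R : Type) := nat -> R.

Definition fps_mul (R : ringType) (f g : fps R) : fps R :=
  fun n => \sum_(i < n.+1) f i * g (n - i)%N.

Definition fps_one (R : ringType) : fps R := fun n => if n is 0%N then 1 else 0.

Definition fps_pow (R : ringType) (f : fps R) (m : nat) : fps R :=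
  iter m (fps_mul f) (fps_one R).

(* composition F(g) for g with zero constant term (only m <= n contribute) *)
Definition fps_comp (R : ringType) (F g : fps R) : fps R :=
  fun n => \sum_(m < n.+1) F m * fps_pow g m n.

Definition gbinom (R : fieldType) (a : R) (n : nat) : R :=
  (\prod_(i < n) (a - i%:R)) / n`!%:R.

Definition binser (R : fieldType) (c a : R) : fps R :=
  fun n => gbinom a n * c ^+ n.

Definition hyp (R : fieldType) (ups lows : seq R) : fps R :=
  fun n => (\prod_(p <- ups) poch p n) /
           ((\prod_(q <- lows) poch q n) * n`!%:R).

(* the series 27 x^2 / (4 - x)^3 = 27 x^2 * 4^{-3} (1 - x/4)^{-3} *)
Definition arg27 (R : fieldType) : fps R :=
  fps_mul (fun n => if n == 2%N then 27%:R else 0)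
          (fun n => (64%:R)^-1 * binser (- 4%:R^-1) (- 3%:R) n).

Definition Qk3 (R : fieldType) (k : nat) (n a b d : R) : R :=
  let u := 3%:R / 4%:R - k%:R / 2%:R - a / 2%:R + b / 2%:R in
  let v := 3%:R / 4%:R - k%:R / 2%:R - a / 2%:R - b / 2%:R in
  (poch u k * poch v k)^-1 *
  \sum_(j < k.+1)
     (poch (- n / 2%:R) j * poch (- n / 2%:R + 2%:R^-1) j
      * poch (- k%:R) j * poch (- n - a + d) j)
     / (j`!%:R * poch d j)
     * poch (u - n + j%:R) (k - j) * poch (v - n + j%:R) (k - j).

(* "generic": c is not a nonpositive integer *)
Definition not_nonpos_int (R : ringType) (c : R) : Prop :=
  forall m : nat, c + m%:R != 0.

From HB Require Import structures.
From mathcomp Require Import all_boot all_order all_algebra.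
From mathcomp Require Import ring zify.
From Stdlib Require Import FunctionalExtensionality.
Import Order.TTheory GRing.Theory Num.Theory.
Local Open Scope ring_scope.

Set Implicit Arguments. Unset Strict Implicit. Unset Printing Implicit Defensive.

(* Since [27 x^2 / (4 - x)^3 = (27/64) x^2 (1 - x/4)^-3], the coefficient of [x^n] in
   [(1 - x/4)^-a * 4F3(27 x^2 / (4 - x)^3)] is, by the triplication and duplication formulas
   for Pochhammer symbols, [(a)_n / (n! 4^n)] times the terminating balanced series
     [4F3(-n/2, (1 - n)/2, a + n, k + d; p1, p2, d | 1]],  [p1, p2 = 3/4 + k/2 + a/2 +- b/2].
   Expanding [(a + n)_m (k + d)_m] by the Pfaff-Saalschutz identity and exchanging the two
   summations, the inner sums are again Pfaff-Saalschutz sums; what remains is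
   [4^n (q1)_n (q2)_n / ((c1)_n (c2)_n)] times the polynomial [Q_k^(3')]. *)

Section Pochhammer.
Variable R : nzRingType.
Implicit Types x y : R.

Lemma poch0 x : poch x 0 = 1.
Proof. by rewrite /poch big_ord0. Qed.

Lemma pochS x n : poch x n.+1 = poch x n * (x + n%:R).
Proof. by rewrite /poch big_ord_recr. Qed.

Lemma pochSl x n : poch x n.+1 = x * poch (x + 1) n.
Proof.
rewrite /poch big_ord_recl /= addr0; congr (_ * _); apply: eq_bigr => i _.
by rewrite /bump /= natrD addrA.
Qed.

Lemma poch_add x m n : poch x (m + n) = poch x m * poch (x + m%:R) n.
Proof.
elim: n => [|n IHn]; first by rewrite addn0 poch0 mulr1.
by rewrite addnS !pochS IHn natrD addrA mulrA.
Qed.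

Lemma poch_oppn_eq0 (m j : nat) : (m < j)%N -> poch (- m%:R : R) j = 0.
Proof. by move=> ltmj; rewrite -(subnKC ltmj) poch_add pochS addNr mulr0 mul0r. Qed.

End Pochhammer.

Section CommutativePochhammer.
Variable R : comNzRingType.
Implicit Types x y : R.

Lemma poch_reflect x n : poch x n = (-1) ^+ n * poch (1 - x - n%:R) n.
Proof.
elim: n x => [|n IHn] x; first by rewrite !poch0 expr0 mulr1.
rewrite pochS IHn pochSl exprS -natr1.
have -> : 1 - x - (n%:R + 1) + 1 = 1 - x - n%:R by ring.
ring.
Qed.

Lemma poch_oppn (m l : nat) : poch (- m%:R : R) l = (-1) ^+ l * ('C(m, l) * l`!)%:R.
Proof.
elim: l => [|l IHl]; first by rewrite poch0 bin0 expr0 mul1r.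
rewrite pochS IHl exprS factS mulnA [('C(m, l.+1) * _)%N]mulnC mul_bin_left.
case: (leqP l m) => lelm; first by rewrite !natrM natrB //; ring.
by rewrite bin_small // !(mul0n, muln0, mul0r, mulr0).
Qed.

Lemma poch_vandermonde x y r :
  poch (x + y) r = \sum_(i < r.+1) 'C(r, i)%:R * (poch x i * poch y (r - i)).
Proof.
elim: r => [|r IHr]; first by rewrite big_ord1 !poch0 bin0 mul1r mulr1.
have split_step : poch (x + y) r.+1 =
    \sum_(i < r.+1) 'C(r, i)%:R * (poch x i.+1 * poch y (r - i)) +
    \sum_(i < r.+1) 'C(r, i)%:R * (poch x i * poch y (r.+1 - i)).
  rewrite pochS IHr mulr_suml -big_split; apply: eq_bigr => i _ /=.
  have leir : (i <= r)%N by rewrite -ltnS ltn_ord.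
  by rewrite subSn // !pochS natrB //; ring.
rewrite split_step big_ord_recr (big_ord_recl r) [in RHS]big_ord_recl [in RHS]big_ord_recr /=.
rewrite !subnn subn0 !bin0 !binn.
rewrite [X in _ = _ + (X + _)](_ : _ =
    \sum_(i < r) 'C(r, i.+1)%:R * (poch x i.+1 * poch y (r - i)) +
    \sum_(i < r) 'C(r, i)%:R * (poch x i.+1 * poch y (r - i))).
  by rewrite /bump /=; ring.
rewrite -big_split; apply: eq_bigr => i _ /=.
by rewrite /bump /= add1n subSS binS natrD mulrDl.
Qed.

End CommutativePochhammer.

Lemma poch_neq0 (R : idomainType) (x : R) n : not_nonpos_int x -> poch x n != 0.
Proof. by move=> xP; apply/prodf_neq0 => i _. Qed.

Lemma not_nonpos_int_addn (R : nzRingType) (x : R) (j : nat) :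
  not_nonpos_int x -> not_nonpos_int (x + j%:R).
Proof. by move=> xP m; rewrite -addrA -natrD. Qed.

Section FiniteSums.
Variable R : nmodType.
Implicit Type f : nat -> R.

Lemma sum_ord_extend f n m : (n <= m)%N ->
  (forall i, (n <= i < m)%N -> f i = 0) ->
  \sum_(i < n) f i = \sum_(i < m) f i.
Proof.
move=> lenm f0; rewrite -!(big_mkord xpredT) (big_cat_nat (leq0n n) lenm) /=.
rewrite [X in _ = _ + X]big1_seq ?addr0 // => i /andP[_].
by rewrite mem_index_iota => /f0.
Qed.

Lemma sum_ord_window f n p r : (p + r <= n)%N ->
  (forall i, (i <= n)%N -> (i < p)%N || (p + r < i)%N -> f i = 0) ->
  \sum_(i < n.+1) f i = \sum_(i < r.+1) f (p + i)%N.
Proof.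
move=> lepr f0.
rewrite (@sum_ord_extend (fun i => f (p + i)%N) r.+1 (n.+1 - p)); first last.
- by move=> i /andP[leri ltin]; apply: f0; [lia | rewrite ltn_add2l leri orbT].
- lia.
rewrite -!(big_mkord xpredT) (@big_cat_nat _ _ _ p) //=; last lia.
rewrite big1_seq ?add0r; last first.
  by move=> i /andP[_]; rewrite mem_index_iota => /andP[_ ltip]; apply: f0; [lia | rewrite ltip].
by rewrite -{1}(add0n p) big_addn big_mkord; apply: eq_bigr => i _; rewrite addnC.
Qed.

Lemma sum_triangle_swap (F : nat -> nat -> R) n :
  \sum_(m < n.+1) \sum_(j < m.+1) F j (m - j)%N =
  \sum_(j < n.+1) \sum_(l < (n - j).+1) F j l.
Proof.
elim: n => [|n IHn]; first by rewrite !big_ord1.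
rewrite big_ord_recr /= IHn [RHS]big_ord_recr /= subnn big_ord1.
rewrite [X in _ = X + _](eq_bigr (fun j : 'I_n.+1 =>
    \sum_(l < (n - j).+1) F j l + F j (n.+1 - j)%N)); last first.
  by move=> j _; rewrite subSn ?big_ord_recr // -ltnS.
by rewrite big_split /= [\sum_(j < n.+2) _]big_ord_recr /= subnn addrA.
Qed.

End FiniteSums.

Section Saalschutz.
Variable R : numFieldType.
Implicit Types al be e : R.

Definition saalschutz_term al be e N j :=
  poch al j * poch be j * poch (al + be + e + j%:R) (N - j) * poch e (N - j).

(* WZ-style certificate: the induction step from [(N, e + 1)] to [(N.+1, e)] telescopes in [j]. *)
Definition saalschutz_antidiff al be e N j :=
  if j is j'.+1 then
    - ('C(N, j')%:R * (poch al j * poch be j * poch (e + 1) (N.+1 - j)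
                       * poch (al + be + e + j%:R) (N.+1 - j)))
  else 0.

Lemma saalschutz_diff al be e N j : (j < N.+2)%N ->
  'C(N.+1, j)%:R * saalschutz_term al be e N.+1 j
  - (al + e) * (be + e) * ('C(N, j)%:R * saalschutz_term al be (e + 1) N j)
  = saalschutz_antidiff al be e N j.+1 - saalschutz_antidiff al be e N j.
Proof.
rewrite ltnS leq_eqVlt => /orP[/eqP->|ltjN].
  rewrite /saalschutz_term /saalschutz_antidiff /= ?subnn ?binn.
  by rewrite !(bin_small (ltnSn N)) !poch0; ring.
rewrite /saalschutz_term /saalschutz_antidiff subSn // !subSS.
rewrite [poch (_ + _ + e + _) (N - j).+1]pochSl [poch e (N - j).+1]pochSl.
rewrite [poch (e + 1) (N - j).+1]pochS (pochS al) (pochS be).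
have -> : al + be + (e + 1) + j%:R = al + be + e + j%:R + 1 by ring.
have -> : al + be + e + j.+1%:R = al + be + e + j%:R + 1 by rewrite -natr1; ring.
case: j ltjN => [|j] ltjN; first by rewrite !bin0 !subn0 !poch0; ring.
have binSr : 'C(N, j.+1)%:R = 'C(N, j)%:R * (N%:R - j%:R) / j.+1%:R :> R.
  rewrite -natrB; last exact: ltnW.
  rewrite -natrM mulnC -mul_bin_left natrM; field.
  by rewrite addrC natr1 pnatr_eq0.
rewrite binS natrD binSr natrB // -!natr1; field.
by rewrite natr1 pnatr_eq0.
Qed.

Lemma saalschutz N al be e :
  \sum_(j < N.+1) 'C(N, j)%:R * saalschutz_term al be e N j
  = poch (be + e) N * poch (al + e) N.
Proof.
elim: N e => [|N IHN] e.
  by rewrite big_ord1 /saalschutz_term !poch0 bin0 !mulr1.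
have step : \sum_(j < N.+2) 'C(N.+1, j)%:R * saalschutz_term al be e N.+1 j
    = (al + e) * (be + e) * \sum_(j < N.+1) 'C(N, j)%:R * saalschutz_term al be (e + 1) N j.
  rewrite [in RHS](@sum_ord_extend _
      (fun j => 'C(N, j)%:R * saalschutz_term al be (e + 1) N j) N.+1 N.+2) //; last first.
    by move=> i /andP[ltNi _]; rewrite bin_small // mul0r.
  apply/eqP; rewrite mulr_sumr -subr_eq0 -sumrB; apply/eqP.
  rewrite (eq_bigr _ (fun j _ => saalschutz_diff al be e (ltn_ord j))).
  rewrite -(big_mkord xpredT
    (fun j => saalschutz_antidiff al be e N j.+1 - saalschutz_antidiff al be e N j)).
  rewrite telescope_sumr // /saalschutz_antidiff bin_small //; ring.
rewrite step IHN !pochSl.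
have -> : be + (e + 1) = be + e + 1 by ring.
have -> : al + (e + 1) = al + e + 1 by ring.
ring.
Qed.

End Saalschutz.

Section BinomialSeries.
Variable R : numFieldType.
Implicit Types al be c : R.

Lemma natr_fact_neq0 n : (n`!%:R : R) != 0.
Proof. by rewrite pnatr_eq0 -lt0n fact_gt0. Qed.

Lemma gbinomE al n : gbinom al n = (-1) ^+ n * poch (- al) n / n`!%:R.
Proof.
congr (_ / _); elim: n => [|n IHn]; first by rewrite big_ord0 poch0 mulr1.
by rewrite big_ord_recr /= IHn pochS exprS; ring.
Qed.

Lemma gbinom0 n : gbinom (0 : R) n = (n == 0)%:R.
Proof.
case: n => [|n]; first by rewrite /gbinom big_ord0 mul1r invr1.
by rewrite /gbinom big_ord_recl /= subrr !mul0r.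
Qed.

Lemma gbinom_vandermonde al be r :
  \sum_(i < r.+1) gbinom al i * gbinom be (r - i) = gbinom (al + be) r.
Proof.
rewrite gbinomE opprD poch_vandermonde mulr_sumr mulr_suml; apply: eq_bigr => i _.
have leir : (i <= r)%N by rewrite -ltnS ltn_ord.
have binE : ('C(r, i)%:R : R) = r`!%:R / (i`!%:R * (r - i)`!%:R).
  by rewrite -(bin_fact leir) !natrM; field; rewrite !natr_fact_neq0.
have signE : (-1) ^+ r = (-1) ^+ i * (-1) ^+ (r - i) :> R by rewrite -exprD subnKC.
by rewrite !gbinomE binE signE; field; rewrite !natr_fact_neq0.
Qed.

Definition xbinser c al p : fps R :=
  fun n => if (p <= n)%N then gbinom al (n - p) * c ^+ (n - p) else 0.

Lemma fps_mul_xbinser c al be p q :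
  fps_mul (xbinser c al p) (xbinser c be q) = xbinser c (al + be) (p + q).
Proof.
apply: functional_extensionality => n; rewrite /fps_mul {3}/xbinser.
case: ifP => lepqn; last first.
  apply: big1 => i _; rewrite /xbinser; case: ifP => lepi; last by rewrite mul0r.
  case: ifP => leqni; last by rewrite mulr0.
  by move/negbT: lepqn; have := ltn_ord i; lia.
rewrite (@sum_ord_window _ (fun i => xbinser c al p i * xbinser c be q (n - i)%N)
  n p (n - p - q)); first last.
- move=> i lein /orP[ltip|ltin]; rewrite /xbinser; first by rewrite leqNgt ltip mul0r.
  case: (p <= i)%N; last by rewrite mul0r.
  by case: ifP => leqni; [lia | rewrite mulr0].
- lia.
rewrite subnDA -gbinom_vandermonde mulr_suml; apply: eq_bigr => i _.
have lei : (i <= n - p - q)%N by rewrite -ltnS ltn_ord.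
rewrite /xbinser leq_addr addKn.
have -> : (q <= n - (p + i))%N by lia.
have -> : (n - (p + i) - q = n - p - q - i)%N by lia.
have -> : c ^+ (n - p - q) = c ^+ i * c ^+ (n - p - q - i) by rewrite -exprD subnKC.
ring.
Qed.

Lemma binser_xbinser c al : binser c al = xbinser c al 0.
Proof. by apply: functional_extensionality => n; rewrite /xbinser subn0. Qed.

End BinomialSeries.

Section Arg27.
Variable R : numFieldType.

Lemma arg27E n : arg27 R n = 27%:R / 64%:R * xbinser (- 4%:R^-1) (- 3%:R) 2 n.
Proof.
rewrite /arg27 /fps_mul /xbinser /binser; case: ifP => le2n; last first.
  rewrite mulr0; apply: big1 => i _; case: eqP => [i2|]; last by rewrite mul0r.
  by move: le2n; have := ltn_ord i; rewrite i2; lia.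
rewrite (bigD1 (Ordinal (le2n : (2 < n.+1)%N))) //= big1 ?addr0; first by ring.
move=> i /negbTE i_neq2; case: eqP => [i2|]; last by rewrite mul0r.
by move: i_neq2; rewrite -val_eqE /= i2.
Qed.

Lemma fps_pow_arg27 m n : fps_pow (arg27 R) m n =
  (27%:R / 64%:R) ^+ m * xbinser (- 4%:R^-1) (- (3 * m)%:R) (2 * m) n.
Proof.
elim: m n => [|m IHm] n.
  rewrite /fps_pow /= /fps_one /xbinser muln0 oppr0 expr0 mul1r subn0 gbinom0.
  by case: n => [|n] /=; rewrite ?expr0 ?mulr1 ?mul0r.
rewrite /fps_pow iterS -/(fps_pow (arg27 R) m) /fps_mul.
under eq_bigr do rewrite arg27E IHm.
rewrite [RHS](_ : _ = (27%:R / 64%:R) ^+ m.+1 *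
    fps_mul (xbinser (- 4%:R^-1) (- 3%:R) 2) (xbinser (- 4%:R^-1) (- (3 * m)%:R) (2 * m)) n).
  by rewrite /fps_mul mulr_sumr; apply: eq_bigr => i _; rewrite exprS; ring.
by rewrite fps_mul_xbinser -opprD -natrD !mulnS.
Qed.

(* The hypothesis says [cs = (1 - x/4)^-a F(arg27)], as
   [arg27^m = (27/64)^m x^(2m) (1 - x/4)^(-3m)]. *)
Lemma fps_comp_arg27 (F cs : fps R) (a : R) :
  (forall n, cs n = \sum_(m < n.+1)
     F m * ((27%:R / 64%:R) ^+ m * xbinser (- 4%:R^-1) (- (3 * m)%:R - a) (2 * m) n)) ->
  fps_comp F (arg27 R) = fps_mul (binser (- 4%:R^-1) a) cs.
Proof.
move=> csE; apply: functional_extensionality => n.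
rewrite /fps_comp binser_xbinser.
under eq_bigr do rewrite fps_pow_arg27.
transitivity (\sum_(m < n.+1) F m * (27%:R / 64%:R) ^+ m *
  fps_mul (xbinser (- 4%:R^-1) a 0) (xbinser (- 4%:R^-1) (- (3 * m)%:R - a) (2 * m)) n).
  by apply: eq_bigr => m _; rewrite fps_mul_xbinser addrC subrK add0n mulrA.
rewrite /fps_mul; under [RHS]eq_bigr => i _ do rewrite csE mulr_sumr.
rewrite [RHS](eq_bigr (fun i : 'I_n.+1 => \sum_(m < n.+1) xbinser (- 4%:R^-1) a 0 i *
    (F m * ((27%:R / 64%:R) ^+ m *
            xbinser (- 4%:R^-1) (- (3 * m)%:R - a) (2 * m) (n - i)%N)))); last first.
  move=> i _; apply: (@sum_ord_extend _ (fun m => xbinser (- 4%:R^-1) a 0 i *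
    (F m * ((27%:R / 64%:R) ^+ m *
            xbinser (- 4%:R^-1) (- (3 * m)%:R - a) (2 * m) (n - i)%N)))) => [|m /andP[ltm _]].
    lia.
  by rewrite /xbinser ifF ?mulr0 //; apply/negbTE; lia.
rewrite exchange_big /=; apply: eq_bigr => m _; rewrite mulr_sumr.
by apply: eq_bigr => i _; ring.
Qed.

End Arg27.

Section PochhammerMultiplication.
Variable R : numFieldType.
Implicit Types x y : R.

Lemma poch_mul3 y m : poch y (3 * m) =
  27%:R ^+ m * poch (y / 3%:R) m * poch (3%:R^-1 + y / 3%:R) m
  * poch (2%:R / 3%:R + y / 3%:R) m.
Proof.
elim: m => [|m IHm]; first by rewrite muln0 !poch0 expr0 !mulr1.
rewrite mulnS addnC poch_add IHm !pochS exprS !poch0 natrM -!natr1; by field.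
Qed.

Lemma poch_mul2 y m :
  poch y (2 * m) = 4%:R ^+ m * poch (y / 2%:R) m * poch (y / 2%:R + 2%:R^-1) m.
Proof.
elim: m => [|m IHm]; first by rewrite muln0 !poch0 expr0 !mulr1.
rewrite mulnS addnC poch_add IHm !pochS exprS !poch0 natrM -!natr1; by field.
Qed.

Lemma poch_half y n : poch y n =
  2%:R ^+ n * poch (y / 2%:R) (n - n./2) * poch (y / 2%:R + 2%:R^-1) n./2.
Proof.
have sq2 : (2%:R : R) ^+ 2 = 4%:R by rewrite -natrX.
move: (odd_double_half n); set h := n./2; rewrite -addnn.
case: (odd n) => /= <-.
  rewrite (_ : (1 + (h + h) - h = h.+1)%N); last lia.
  rewrite addnn -mul2n add1n pochS poch_mul2 exprS exprM pochS sq2 natrM.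
  by field.
by rewrite add0n addnn -mul2n (_ : (2 * h - h = h)%N) ?poch_mul2 ?exprM ?sq2 //; lia.
Qed.

Lemma poch_reflect_split x (n m j k : nat) : (j <= m <= n)%N -> (j <= k)%N ->
  poch (x - n%:R + j%:R) (m - j) * poch (1 - x) (n - m) * poch x k =
  (-1) ^+ m * poch (1 - k%:R - x) n * poch (x - n%:R + j%:R) (k - j).
Proof.
move=> /andP[lejm lemn] lejk; set y := x - n%:R + j%:R.
rewrite [poch (1 - x) _]poch_reflect [poch (1 - k%:R - x) _]poch_reflect.
have -> : 1 - (1 - x) - (n - m)%:R = y + (m - j)%:R by rewrite /y !natrB //; ring.
have -> : 1 - (1 - k%:R - x) - n%:R = y + (k - j)%:R by rewrite /y natrB //; ring.
have sign_nm : (-1) ^+ m * (-1) ^+ n = (-1) ^+ (n - m) :> R.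
  by rewrite -{1}(subnKC lemn) exprD mulrA -exprD addnn -mul2n mulnC exprM sqrr_sign mul1r.
have yx : y + (n - j)%:R = x by rewrite /y natrB; [ring | lia].
transitivity ((-1) ^+ (n - m) *
    (poch y (m - j) * poch (y + (m - j)%:R) (n - m) * poch (y + (n - j)%:R) k)).
  by rewrite yx; ring.
rewrite -poch_add (_ : (m - j + (n - m) = n - j)%N); last lia.
rewrite -(poch_add y) mulrA sign_nm mulrAC -mulrA -(poch_add y); congr (_ * poch y _); lia.
Qed.

End PochhammerMultiplication.

Section Balanced4F3.
Variable R : numFieldType.
Variables (n k : nat) (a b d : R).

Definition p1 : R := 3%:R / 4%:R + k%:R / 2%:R + a / 2%:R + b / 2%:R.
Definition p2 : R := 3%:R / 4%:R + k%:R / 2%:R + a / 2%:R - b / 2%:R.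
Definition u : R := 3%:R / 4%:R - k%:R / 2%:R - a / 2%:R + b / 2%:R.
Definition v : R := 3%:R / 4%:R - k%:R / 2%:R - a / 2%:R - b / 2%:R.
Definition c1 : R := 2%:R^-1 + k%:R + a + b.
Definition c2 : R := 2%:R^-1 + k%:R + a - b.
Definition q1 : R := 4%:R^-1 - k%:R / 2%:R + a / 2%:R - b / 2%:R.
Definition q2 : R := 4%:R^-1 - k%:R / 2%:R + a / 2%:R + b / 2%:R.
Definition s0 : R := - n%:R / 2%:R.
Definition s1 : R := - n%:R / 2%:R + 2%:R^-1.
Definition nh : nat := n./2.
Definition s2 : R := 2%:R^-1 - n%:R + nh%:R.

Definition t4F3 m := poch s0 m * poch s1 m * poch (a + n%:R) m * poch (k%:R + d) m /
  (poch p1 m * poch p2 m * poch d m * m`!%:R).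
Definition touter j := poch s0 j * poch s1 j * poch (- k%:R) j * poch (d - a - n%:R) j /
  (poch p1 j * poch p2 j * poch d j * j`!%:R).
Definition tinner j l :=
  poch (s0 + j%:R) l * poch (s1 + j%:R) l * poch (k%:R + a + n%:R) l /
  (poch (p1 + j%:R) l * poch (p2 + j%:R) l * l`!%:R).
Definition inner_sum j :=
  poch (u - n%:R + j%:R) (nh - j) * poch (v - n%:R + j%:R) (nh - j) /
  (poch (p1 + j%:R) (nh - j) * poch (p2 + j%:R) (nh - j)).
Definition tQ j := poch s0 j * poch s1 j * poch (- k%:R) j * poch (- n%:R - a + d) j /
  (j`!%:R * poch d j) * poch (u - n%:R + j%:R) (k - j) * poch (v - n%:R + j%:R) (k - j).

Lemma nh_leq : (nh <= n)%N.
Proof. by rewrite /nh -{2}(odd_double_half n) -addnn; lia. Qed.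

Lemma s01E : (s0 = - nh%:R /\ s1 = s2) \/ (s0 = s2 /\ s1 = - nh%:R).
Proof.
rewrite /s0 /s1 /s2 /nh; move: (odd_double_half n); set h := n./2; rewrite -addnn.
by case: (odd n) => /= <-; [right | left]; rewrite ?natrD; split; field.
Qed.

Lemma poch_s01_shift j l :
  poch (s0 + j%:R) l * poch (s1 + j%:R) l = poch (- nh%:R + j%:R) l * poch (s2 + j%:R) l.
Proof. by case: s01E => [[-> ->]|[-> ->]] //; rewrite mulrC. Qed.

Lemma poch_s01 j : poch s0 j * poch s1 j = poch (- nh%:R) j * poch s2 j.
Proof. by have := poch_s01_shift 0 j; rewrite !addr0. Qed.

Lemma touter_eq0 j : (nh < j)%N || (k < j)%N -> touter j = 0.
Proof.
by case/orP => ltj; rewrite /touter ?poch_s01 (poch_oppn_eq0 _ ltj) !(mulr0, mul0r).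
Qed.

Hypothesis p1P : not_nonpos_int p1.
Hypothesis p2P : not_nonpos_int p2.
Hypothesis dP : not_nonpos_int d.

Lemma t4F3_split m : t4F3 m = \sum_(j < m.+1) touter j * tinner j (m - j).
Proof.
have := saalschutz m (- k%:R) (d - a - n%:R) (k%:R + a + n%:R).
rewrite (_ : d - a - n%:R + (k%:R + a + n%:R) = k%:R + d); last by ring.
rewrite (_ : - k%:R + (k%:R + a + n%:R) = a + n%:R); last by ring.
rewrite (_ : t4F3 m = poch s0 m * poch s1 m / (poch p1 m * poch p2 m * poch d m * m`!%:R) *
   (poch (k%:R + d) m * poch (a + n%:R) m)); last by rewrite /t4F3; ring.
move=> <-; rewrite mulr_sumr; apply: eq_bigr => -[j ltjm] _ /=.
rewrite /saalschutz_term (_ : - k%:R + (d - a - n%:R) + (k%:R + a + n%:R) = d); last by ring.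
have [l ->] : exists l, m = (j + l)%N by exists (m - j)%N; rewrite subnKC // -ltnS.
rewrite addKn /touter /tinner !poch_add.
have binE : ('C(j + l, j)%:R : R) = (j + l)`!%:R / (j`!%:R * l`!%:R).
  have := bin_fact (leq_addr l j); rewrite addKn => <-.
  by rewrite !natrM; field; rewrite !natr_fact_neq0.
rewrite binE; field.
by rewrite !natr_fact_neq0 !poch_neq0 //; apply: not_nonpos_int_addn.
Qed.

(* For [j <= nh] the inner series stops at [l = nh - j] and is summed by Pfaff-Saalschutz. *)
Lemma sum_tinner j : (j <= nh)%N -> \sum_(l < (n - j).+1) tinner j l = inner_sum j.
Proof.
move=> lejh; set P := (nh - j)%N; set be := k%:R + a + n%:R; set e := 1 - p2 - nh%:R.
have nhjE : - nh%:R + j%:R = - (P%:R : R) by rewrite /P natrB //; ring.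
rewrite -(@sum_ord_extend _ (tinner j) P.+1 (n - j).+1); first last.
- by move=> l /andP[ltPl _]; rewrite /tinner poch_s01_shift nhjE poch_oppn_eq0 // !mul0r.
- by have := nh_leq; rewrite /P; lia.
have tinnerE l : (l <= P)%N -> tinner j l =
    (-1) ^+ P / (poch (p1 + j%:R) P * poch (p2 + j%:R) P) *
    ('C(P, l)%:R * saalschutz_term (s2 + j%:R) be e P l).
  move=> lelP; rewrite /tinner poch_s01_shift nhjE poch_oppn /saalschutz_term.
  rewrite (_ : s2 + j%:R + be + e + l%:R = p1 + j%:R + l%:R); last first.
    by rewrite /s2 /be /e /p1 /p2; field.
  have p2jlP := not_nonpos_int_addn l (not_nonpos_int_addn j p2P).
  have p2jl_reflect : poch (p2 + j%:R + l%:R) (P - l) = (-1) ^+ (P - l) * poch e (P - l).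
    by rewrite poch_reflect /e /P !natrB //; congr (_ * poch _ _); ring.
  have e_neq0 : poch e (P - l) != 0.
    by move: (poch_neq0 (P - l) p2jlP); rewrite p2jl_reflect mulf_eq0 negb_or => /andP[].
  have signE : (-1) ^+ P = (-1) ^+ l * (-1) ^+ (P - l) :> R by rewrite -exprD subnKC.
  rewrite -[in poch (p1 + j%:R) P](subnKC lelP) -[in poch (p2 + j%:R) P](subnKC lelP).
  rewrite !poch_add p2jl_reflect signE natrM; field.
  by rewrite e_neq0 signr_eq0 natr_fact_neq0 !poch_neq0 //; do ?apply: not_nonpos_int_addn.
rewrite (eq_bigr _ (fun (l : 'I_P.+1) _ => tinnerE l (ltn_ord l))) -mulr_sumr saalschutz.
have -> : poch (be + e) P = (-1) ^+ P * poch (v - n%:R + j%:R) P.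
  by rewrite poch_reflect /be /e /P /v /p2 natrB //; congr (_ * poch _ _); field.
rewrite (_ : s2 + j%:R + e = u - n%:R + j%:R); last by rewrite /s2 /e /u /p2; field.
by rewrite /inner_sum -/P -signr_odd; case: (odd P); rewrite ?expr0 ?expr1; ring.
Qed.

Hypothesis c1P : not_nonpos_int c1.
Hypothesis c2P : not_nonpos_int c2.
Hypothesis uvP : poch u k * poch v k != 0.

Lemma not_nonpos_int_1Bu : not_nonpos_int (1 - u).
Proof.
move=> m; rewrite (_ : 1 - u + m%:R = (c2 + (2 * m)%:R) / 2%:R).
  by rewrite mulf_neq0 // invr_eq0 pnatr_eq0.
by rewrite /u /c2 natrM; field.
Qed.

Lemma not_nonpos_int_1Bv : not_nonpos_int (1 - v).
Proof.
move=> m; rewrite (_ : 1 - v + m%:R = (c1 + (2 * m)%:R) / 2%:R).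
  by rewrite mulf_neq0 // invr_eq0 pnatr_eq0.
by rewrite /v /c1 natrM; field.
Qed.

Lemma poch_c1 : poch c1 n = 2%:R ^+ n * poch (1 - v) (n - nh) * poch p1 nh.
Proof. by rewrite poch_half -/nh /c1 /v /p1; congr (_ * poch _ _ * poch _ _); field. Qed.

Lemma poch_c2 : poch c2 n = 2%:R ^+ n * poch (1 - u) (n - nh) * poch p2 nh.
Proof. by rewrite poch_half -/nh /c2 /u /p2; congr (_ * poch _ _ * poch _ _); field. Qed.

Lemma touter_inner_sum j : (j <= nh)%N -> (j <= k)%N ->
  touter j * inner_sum j = 4%:R ^+ n * poch q1 n * poch q2 n / (poch c1 n * poch c2 n) *
    ((poch u k * poch v k)^-1 * tQ j).
Proof.
move=> lejh lejk.
have [uk_neq0 vk_neq0] : poch u k != 0 /\ poch v k != 0.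
  by move: uvP; rewrite mulf_eq0 negb_or => /andP[].
have p1E : poch p1 nh = poch p1 j * poch (p1 + j%:R) (nh - j) by rewrite -poch_add subnKC.
have p2E : poch p2 nh = poch p2 j * poch (p2 + j%:R) (nh - j) by rewrite -poch_add subnKC.
have q1E : q1 = 1 - k%:R - u by rewrite /q1 /u; field.
have q2E : q2 = 1 - k%:R - v by rewrite /q2 /v; field.
have lejhn : (j <= nh <= n)%N by rewrite lejh nh_leq.
have uE : poch (u - n%:R + j%:R) (nh - j) = (-1) ^+ nh * poch (1 - k%:R - u) n *
    poch (u - n%:R + j%:R) (k - j) / (poch (1 - u) (n - nh) * poch u k).
  rewrite -(poch_reflect_split u lejhn lejk); field.
  by rewrite uk_neq0 poch_neq0 //; apply: not_nonpos_int_1Bu.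
have vE : poch (v - n%:R + j%:R) (nh - j) = (-1) ^+ nh * poch (1 - k%:R - v) n *
    poch (v - n%:R + j%:R) (k - j) / (poch (1 - v) (n - nh) * poch v k).
  rewrite -(poch_reflect_split v lejhn lejk); field.
  by rewrite vk_neq0 poch_neq0 //; apply: not_nonpos_int_1Bv.
have pow4E : (4%:R : R) ^+ n = 2%:R ^+ n * 2%:R ^+ n by rewrite -exprMn -natrM.
have pow2_neq0 : (2%:R : R) ^+ n != 0 by rewrite expf_neq0 // pnatr_eq0.
rewrite /touter /inner_sum /tQ poch_c1 poch_c2 p1E p2E q1E q2E uE vE pow4E.
rewrite (_ : - n%:R - a + d = d - a - n%:R); last by ring.
rewrite -signr_odd; case: (odd nh); rewrite ?expr1 ?expr0; field;
  rewrite pow2_neq0 uk_neq0 vk_neq0 natr_fact_neq0 !poch_neq0 //;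
  by first [exact: not_nonpos_int_1Bu | exact: not_nonpos_int_1Bv | apply: not_nonpos_int_addn].
Qed.

Lemma sum_t4F3 : \sum_(m < n.+1) t4F3 m =
  4%:R ^+ n * poch q1 n * poch q2 n / (poch c1 n * poch c2 n) * Qk3 k n%:R a b d.
Proof.
under eq_bigr => m _ do rewrite t4F3_split.
rewrite (sum_triangle_swap (fun j l => touter j * tinner j l) n).
rewrite (eq_bigr (fun j : 'I_n.+1 => touter j * inner_sum j)); last first.
  move=> j _; rewrite -mulr_sumr; case: (leqP j nh) => lejh; first by rewrite sum_tinner.
  by rewrite touter_eq0 ?lejh // !mul0r.
rewrite (_ : Qk3 k n%:R a b d = (poch u k * poch v k)^-1 * \sum_(j < k.+1) tQ j) //.
rewrite (@sum_ord_extend _ (fun j => touter j * inner_sum j) n.+1 (n + k).+1); first last.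
- by move=> j /andP[ltnj _]; rewrite touter_eq0 ?mul0r //; have := nh_leq; lia.
- lia.
rewrite (@sum_ord_extend _ tQ k.+1 (n + k).+1); first last.
- move=> j /andP[ltkj _]; rewrite /tQ (poch_oppn_eq0 _ ltkj); ring.
- lia.
rewrite !mulr_sumr; apply: eq_bigr => -[j ltj] _ /=.
case: (leqP j nh) => lejh; last first.
  by rewrite touter_eq0 ?lejh // /tQ poch_s01 (poch_oppn_eq0 _ lejh); ring.
case: (leqP j k) => lejk; last first.
  by rewrite touter_eq0 ?lejk ?orbT // /tQ (poch_oppn_eq0 _ lejk); ring.
exact: touter_inner_sum.
Qed.

End Balanced4F3.

Section Coefficients.
Variable R : numFieldType.

Lemma gbinom_opp_quarter (x : R) r :
  gbinom (- x) r * (- 4%:R^-1) ^+ r = poch x r / (r`!%:R * 4%:R ^+ r).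
Proof.
rewrite gbinomE opprK (_ : (- 4%:R^-1 : R) ^+ r = (-1) ^+ r / 4%:R ^+ r); last first.
  by rewrite [LHS]exprNn exprVn.
have pow4_neq0 : (4%:R : R) ^+ r != 0 by rewrite expf_neq0 // pnatr_eq0.
rewrite -signr_odd; case: (odd r); rewrite ?expr1 ?expr0; field;
  by rewrite pow4_neq0 natr_fact_neq0.
Qed.

Variables (n k : nat) (a b d : R).

Lemma poch_s01_eq0 m : (n < 2 * m)%N -> poch (s0 R n) m * poch (s1 R n) m = 0.
Proof.
move=> ltn2m; have := poch_mul2 (- (n%:R : R)) m; rewrite poch_oppn_eq0 // => /esym/eqP.
rewrite -mulrA mulf_eq0 expf_eq0 pnatr_eq0 andbF /=.
by rewrite /s0 /s1 => /eqP.
Qed.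

Lemma poch_s01E m : (2 * m <= n)%N ->
  poch (s0 R n) m * poch (s1 R n) m = n`!%:R / (4%:R ^+ m * (n - 2 * m)`!%:R).
Proof.
move=> le2mn; have := poch_mul2 (- (n%:R : R)) m.
rewrite poch_oppn mulnC exprM sqrr_sign mul1r -(bin_fact le2mn) natrM mulnC.
have pow4_neq0 : (4%:R : R) ^+ m != 0 by rewrite expf_neq0 // pnatr_eq0.
move=> binE; apply: (mulfI pow4_neq0); rewrite mulrA /s0 /s1 -binE !natrM.
by field; rewrite pow4_neq0 natr_fact_neq0.
Qed.

Definition F4F3 : fps R :=
  hyp [:: a / 3%:R; 3%:R^-1 + a / 3%:R; 2%:R / 3%:R + a / 3%:R; k%:R + d]
      [:: p1 k a b; p2 k a b; d].

Hypothesis p1P : not_nonpos_int (p1 k a b).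
Hypothesis p2P : not_nonpos_int (p2 k a b).
Hypothesis dP : not_nonpos_int d.

Lemma F4F3E m : F4F3 m = poch a (3 * m) / 27%:R ^+ m * poch (k%:R + d) m /
   (poch (p1 k a b) m * poch (p2 k a b) m * poch d m * m`!%:R).
Proof.
rewrite /F4F3 /hyp !big_cons !big_nil poch_mul3 /p1 /p2.
have pow27_neq0 : (27%:R : R) ^+ m != 0 by rewrite expf_neq0 // pnatr_eq0.
by field; rewrite pow27_neq0 natr_fact_neq0 !poch_neq0.
Qed.

Lemma F4F3_coef m :
  F4F3 m * ((27%:R / 64%:R) ^+ m * xbinser (- 4%:R^-1) (- (3 * m)%:R - a) (2 * m) n) =
  poch a n / (n`!%:R * 4%:R ^+ n) * t4F3 n k a b d m.
Proof.
rewrite /xbinser /t4F3; case: leqP => [le2mn | ltn2m]; last first.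
  by rewrite poch_s01_eq0 // !(mulr0, mul0r).
set r := (n - 2 * m)%N; have nE : n = (2 * m + r)%N by rewrite /r subnKC.
rewrite (_ : - (3 * m)%:R - a = - (a + (3 * m)%:R)); last by ring.
rewrite gbinom_opp_quarter F4F3E poch_s01E // expr_div_n.
have pow64E : (64%:R : R) ^+ m * 4%:R ^+ r = 4%:R ^+ n * 4%:R ^+ m.
  rewrite (_ : 64%:R = (4%:R : R) ^+ 3); last by rewrite -natrX.
  by rewrite -exprM -!exprD; congr (_ ^+ _); lia.
have pochaE : poch a (3 * m) * poch (a + (3 * m)%:R) r = poch a n * poch (a + n%:R) m.
  by rewrite -!poch_add; congr (poch _ _); lia.
have pow_neq0 (c p : nat) : (c.+1%:R : R) ^+ p != 0 by rewrite expf_neq0 // pnatr_eq0.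
set W := poch (k%:R + d) m / (poch (p1 k a b) m * poch (p2 k a b) m * poch d m * m`!%:R *
   (4%:R ^+ n * 4%:R ^+ m) * r`!%:R).
transitivity (poch a (3 * m) * poch (a + (3 * m)%:R) r * W).
  rewrite /W -pow64E; field.
  by rewrite !pow_neq0 !natr_fact_neq0 !poch_neq0.
rewrite pochaE /W; field.
by rewrite !pow_neq0 !natr_fact_neq0 !poch_neq0.
Qed.

End Coefficients.

Unset Implicit Arguments.

Theorem theorem6 (C : numClosedFieldType) (k : nat) (a b d : C) :
  let u := 3%:R / 4%:R - k%:R / 2%:R - a / 2%:R + b / 2%:R in
  let v := 3%:R / 4%:R - k%:R / 2%:R - a / 2%:R - b / 2%:R in
  not_nonpos_int (3%:R / 4%:R + k%:R / 2%:R + a / 2%:R + b / 2%:R) ->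
  not_nonpos_int (3%:R / 4%:R + k%:R / 2%:R + a / 2%:R - b / 2%:R) ->
  not_nonpos_int d ->
  not_nonpos_int (2%:R^-1 + k%:R + a + b) ->
  not_nonpos_int (2%:R^-1 + k%:R + a - b) ->
  poch u k * poch v k != 0 ->
  fps_comp
    (hyp [:: a / 3%:R; 3%:R^-1 + a / 3%:R; 2%:R / 3%:R + a / 3%:R; k%:R + d]
         [:: 3%:R / 4%:R + k%:R / 2%:R + a / 2%:R + b / 2%:R;
             3%:R / 4%:R + k%:R / 2%:R + a / 2%:R - b / 2%:R; d])
    (arg27 C)
  =
  fps_mul (binser (- 4%:R^-1) a)
    (fun n : nat =>
       poch a n * poch (4%:R^-1 - k%:R / 2%:R + a / 2%:R - b / 2%:R) n
       * poch (4%:R^-1 - k%:R / 2%:R + a / 2%:R + b / 2%:R) n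
       / (n`!%:R * poch (2%:R^-1 + k%:R + a + b) n
          * poch (2%:R^-1 + k%:R + a - b) n)
       * Qk3 k n%:R a b d).
Proof.
move=> u v p1P p2P dP c1P c2P uvP.
apply: fps_comp_arg27 => n.
under eq_bigr => m _ do rewrite F4F3_coef //.
rewrite -mulr_sumr sum_t4F3 // /q1 /q2 /c1 /c2.
have pow4_neq0 : (4%:R : C) ^+ n != 0 by rewrite expf_neq0 // pnatr_eq0.
by field; rewrite pow4_neq0 natr_fact_neq0 !poch_neq0.
Qed.
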